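(* For the R-GSAV/BDF$k$ scheme with the choice of $\zeta_0$ and $\gamma^{n+1}$ given in the context, suppose $R^n\le E(\phi^n)$ and $R^n\ge 0$. If at step $n$ one is in Case 1, 2 or 3 (i.e., not in Case 4), then $R^{n+1}=E(\phi^{n+1})$ and $$E(\phi^{n+1})=R^{n+1}\le R^n\le E(\phi^n).$$ In particular, the modified energy coincides with the original energy $E$ at step $n+1$, and $E$ does not increase over that step.
   Context: Setting: a dissipative system $\partial_t\phi+\mathcal A\phi+g(\phi)=0$ with $\mathcal A$ positive linear, satisfying $\frac{d}{dt}E_{tot}(\phi)=-\mathcal K(\phi)$, $\mathcal K(\phi)>0$, $E_{tot}\ge-C_0$, $E=E_{tot}+C_0>0$. BDF$k$ data $\alpha_k,A_k,B_k$ ($1\le k\le5$): $k=1$: $1,\ \phi^n,\ \phi^n$; $k=2$: $\frac32,\ 2\phi^n-\frac12\phi^{n-1},\ 2\phi^n-\phi^{n-1}$; $k=3$: $\frac{11}6,\ 3\phi^n-\frac32\phi^{n-1}+\frac13\phi^{n-2},\ 3\phi^n-3\phi^{n-1}+\phi^{n-2}$; $k=4$: $\frac{25}{12},\ 4\phi^n-3\phi^{n-1}+\frac43\phi^{n-2}-\frac14\phi^{n-3},\ 4\phi^n-6\phi^{n-1}+4\phi^{n-2}-\phi^{n-3}$; $k=5$: $\frac{137}{60},\ 5\phi^n-5\phi^{n-1}+\frac{10}3\phi^{n-2}-\frac54\phi^{n-3}+\frac15\phi^{n-4},\ 5\phi^n-10\phi^{n-1}+10\phi^{n-2}-5\phi^{n-3}+\phi^{n-4}$.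 Scheme: Step 1: $\frac{\alpha_k\bar\phi^{n+1}-A_k(\phi^n)}{\delta t}+\mathcal A\bar\phi^{n+1}+g[B_k(\bar\phi^n)]=0$; $\frac{\tilde R^{n+1}-R^n}{\delta t}=-\frac{\tilde R^{n+1}}{E(\bar\phi^{n+1})}\mathcal K(\bar\phi^{n+1})$; $\xi^{n+1}=\tilde R^{n+1}/E(\bar\phi^{n+1})$, $\eta_k^{n+1}=1-(1-\xi^{n+1})^{k+1}$, $\phi^{n+1}=\eta_k^{n+1}\bar\phi^{n+1}$. Step 2: $R^{n+1}=\zeta_0\tilde R^{n+1}+(1-\zeta_0)E(\phi^{n+1})$, where: Case 1 ($\tilde R^{n+1}=E(\phi^{n+1})$): $\zeta_0=0$, $\gamma^{n+1}=\frac{\tilde R^{n+1}\mathcal K(\bar\phi^{n+1})}{E(\bar\phi^{n+1})\mathcal K(\phi^{n+1})}$; Case 2 ($\tilde R^{n+1}>E(\phi^{n+1})$): $\zeta_0=0$, $\gamma^{n+1}=\frac{\tilde R^{n+1}-E(\phi^{n+1})}{\delta t\mathcal K(\phi^{n+1})}+\frac{\tilde R^{n+1}\mathcal K(\bar\phi^{n+1})}{E(\bar\phi^{n+1})\mathcal K(\phi^{n+1})}$; Case 3 ($\tilde R^{n+1}<E(\phi^{n+1})$ and $\tilde R^{n+1}-E(\phi^{n+1})+\delta t\frac{\tilde R^{n+1}}{E(\bar\phi^{n+1})}\mathcal K(\bar\phi^{n+1})\ge0$): $\zeta_0=0$, $\gamma^{n+1}$ as in Case 2; Case 4 (otherwise):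 $\zeta_0=1-\frac{\delta t\tilde R^{n+1}\mathcal K(\bar\phi^{n+1})}{E(\bar\phi^{n+1})(E(\phi^{n+1})-\tilde R^{n+1})}$, $\gamma^{n+1}=0$. *)

From HB Require Import structures.
From mathcomp Require Import all_boot all_order all_algebra.
Set Implicit Arguments. Unset Strict Implicit. Unset Printing Implicit Defensive.
Import Order.TTheory GRing.Theory Num.Theory.
Local Open Scope ring_scope.

Section BDF.
Variables (R : realFieldType) (V : lmodType R).

(* BDFk coefficient alpha_k, 1 <= k <= 5 (value for other k irrelevant). *)
Definition bdf_alpha (k : nat) : R :=
  match k with
  | 1 => 1
  | 2 => 3 / 2
  | 3 => 11 / 6
  | 4 => 25 / 12
  | _ => 137 / 60
  end.

Definition bdf_A (k : nat) (phi : nat -> V) (n : nat) : V :=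
  match k with
  | 1 => phi n
  | 2 => 2 *: phi n - (1/2) *: phi n.-1
  | 3 => 3 *: phi n - (3/2) *: phi n.-1 + (1/3) *: phi n.-2
  | 4 => 4 *: phi n - 3 *: phi n.-1 + (4/3) *: phi n.-2 - (1/4) *: phi (n - 3)%N
  | _ => 5 *: phi n - 5 *: phi n.-1 + (10/3) *: phi n.-2 - (5/4) *: phi (n - 3)%N
         + (1/5) *: phi (n - 4)%N
  end.

Definition bdf_B (k : nat) (phi : nat -> V) (n : nat) : V :=
  match k with
  | 1 => phi n
  | 2 => 2 *: phi n - phi n.-1
  | 3 => 3 *: phi n - 3 *: phi n.-1 + phi n.-2
  | 4 => 4 *: phi n - 6 *: phi n.-1 + 4 *: phi n.-2 - phi (n - 3)%N
  | _ => 5 *: phi n - 10 *: phi n.-1 + 10 *: phi n.-2 - 5 *: phi (n - 3)%N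
         + phi (n - 4)%N
  end.
End BDF.

Section Cases.
Variable R : realFieldType.
(* Arguments: Rt = tilde R^{n+1}, E1 = E(phi^{n+1}), Eb = E(bar phi^{n+1}),
   Kb = K(bar phi^{n+1}), K1 = K(phi^{n+1}), dt = time step. *)
Definition gsav_case1 (Rt E1 : R) : Prop := Rt = E1.
Definition gsav_case2 (Rt E1 : R) : Prop := Rt > E1.
Definition gsav_case3 (Rt E1 Eb Kb dt : R) : Prop :=
  Rt < E1 /\ 0 <= Rt - E1 + dt * (Rt / Eb) * Kb.
Definition gsav_case4 (Rt E1 Eb Kb dt : R) : Prop :=
  ~ (gsav_case1 Rt E1 \/ gsav_case2 Rt E1 \/ gsav_case3 Rt E1 Eb Kb dt).

(* zeta_0 as chosen in Step 2 (boolean test equivalent to "Case 4"). *)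
Definition gsav_zeta0 (Rt E1 Eb Kb dt : R) : R :=
  if (Rt == E1) || (E1 < Rt) || ((Rt < E1) && (0 <= Rt - E1 + dt * (Rt / Eb) * Kb))
  then 0
  else 1 - (dt * Rt * Kb) / (Eb * (E1 - Rt)).

Definition gsav_gamma (Rt E1 Eb Kb K1 dt : R) : R :=
  if Rt == E1 then (Rt * Kb) / (Eb * K1)
  else if (E1 < Rt) || ((Rt < E1) && (0 <= Rt - E1 + dt * (Rt / Eb) * Kb))
  then (Rt - E1) / (dt * K1) + (Rt * Kb) / (Eb * K1)
  else 0.
End Cases.

From HB Require Import structures.
From mathcomp Require Import all_boot all_order all_algebra.
From mathcomp Require Import ring lra.
Set Implicit Arguments. Unset Strict Implicit.
Import Order.TTheory GRing.Theory Num.Theory.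
Local Open Scope ring_scope.

(* The implicit update of the auxiliary variable solves to
   R^n = Rt (1 + dt K(bar phi)/E(bar phi)) = Rt + dt (Rt/E(bar phi)) K(bar phi),
   so R^n >= 0 forces Rt >= 0 and the dissipation term is nonnegative.  Outside
   Case 4 the relaxation parameter zeta_0 vanishes, so R^{n+1} = E(phi^{n+1}),
   and each of Cases 1-3 gives E(phi^{n+1}) <= Rt + dt (Rt/E(bar phi)) K(bar phi)
   = R^n. *)

Section SAVUpdate.
Variables (R : realFieldType) (dt Eb Kb Rn Rt : R).
Hypotheses (dt_gt0 : 0 < dt) (Eb_gt0 : 0 < Eb) (Kb_gt0 : 0 < Kb).
Hypothesis update : (Rt - Rn) / dt = - (Rt / Eb) * Kb.

Lemma sav_update_solved : Rn = Rt + dt * (Rt / Eb) * Kb.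
Proof.
have : (Rt - Rn) / dt * dt = Rt - Rn by rewrite divfK ?lt0r_neq0.
rewrite update => h; lra.
Qed.

Lemma sav_update_ge0 : 0 <= Rn -> 0 <= Rt.
Proof.
have c_gt0 : 0 < dt * Kb / Eb by rewrite divr_gt0 // mulr_gt0.
have -> : Rn = Rt * (1 + dt * Kb / Eb).
  by rewrite sav_update_solved; field; rewrite gt_eqF.
move=> h; nra.
Qed.

Lemma sav_dissipation_ge0 : 0 <= Rn -> 0 <= dt * (Rt / Eb) * Kb.
Proof.
move=> /sav_update_ge0 Rt_ge0.
apply: mulr_ge0; last exact: ltW.
by apply: mulr_ge0; [exact: ltW | apply: divr_ge0 => //; exact: ltW].
Qed.

End SAVUpdate.

Section NotCase4.
Variables (R : realFieldType) (Rt E1 Eb Kb dt : R).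
Hypothesis not_case4 : gsav_case1 Rt E1 \/ gsav_case2 Rt E1
                       \/ gsav_case3 Rt E1 Eb Kb dt.

Lemma gsav_zeta0_not_case4 : gsav_zeta0 Rt E1 Eb Kb dt = 0.
Proof.
rewrite /gsav_zeta0.
case: not_case4 => [h1|[h2|[h3a h3b]]].
- by move/eqP: h1 => ->.
- by rewrite h2 orbT.
- by rewrite h3a h3b !orbT.
Qed.

Lemma gsav_not_case4_le : 0 <= dt * (Rt / Eb) * Kb ->
  E1 <= Rt + dt * (Rt / Eb) * Kb.
Proof.
move: not_case4; rewrite /gsav_case1 /gsav_case2 /gsav_case3.
by case=> [h1|[h2|[_ h3]]] t_ge0; lra.
Qed.

End NotCase4.

Theorem mainTheorem2
  (R : realFieldType) (V : lmodType R)
  (Aop : {linear V -> V}) (g : V -> V)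
  (Etot Kd : V -> R) (C0 : R)
  (hEtot : forall v, - C0 <= Etot v)
  (hE : forall v, 0 < Etot v + C0)
  (hK : forall v, 0 < Kd v)
  (k : nat) (hk : (1 <= k <= 5)%N)
  (dt : R) (hdt : 0 < dt)
  (phi barphi : nat -> V) (Rs : nat -> R) (Rt : R) (n : nat)
  (hstep1 : dt^-1 *: (bdf_alpha R k *: barphi n.+1 - bdf_A k phi n)
            + Aop (barphi n.+1) + g (bdf_B k barphi n) = 0)
  (hRt : (Rt - Rs n) / dt
         = - (Rt / (Etot (barphi n.+1) + C0)) * Kd (barphi n.+1))
  (hphi : phi n.+1 =
     (1 - (1 - Rt / (Etot (barphi n.+1) + C0)) ^+ k.+1) *: barphi n.+1)
  (hRnext : Rs n.+1 =
     let z := gsav_zeta0 Rt (Etot (phi n.+1) + C0) (Etot (barphi n.+1) + C0)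
                 (Kd (barphi n.+1)) dt in
     z * Rt + (1 - z) * (Etot (phi n.+1) + C0))
  (hRle : Rs n <= Etot (phi n) + C0) (hR0 : 0 <= Rs n)
  (hnot4 : gsav_case1 Rt (Etot (phi n.+1) + C0)
           \/ gsav_case2 Rt (Etot (phi n.+1) + C0)
           \/ gsav_case3 Rt (Etot (phi n.+1) + C0) (Etot (barphi n.+1) + C0)
                (Kd (barphi n.+1)) dt) :
  Rs n.+1 = Etot (phi n.+1) + C0 /\
  Rs n.+1 <= Rs n /\ Rs n <= Etot (phi n) + C0.
Proof.
have Eb_gt0 := hE (barphi n.+1); have Kb_gt0 := hK (barphi n.+1).
have R1_eq : Rs n.+1 = Etot (phi n.+1) + C0.
  by rewrite hRnext /= gsav_zeta0_not_case4 // mul0r add0r subr0 mul1r.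
split=> //; split=> //.
have t_ge0 := sav_dissipation_ge0 hdt Eb_gt0 Kb_gt0 hRt hR0.
rewrite R1_eq (sav_update_solved hdt hRt).
exact: gsav_not_case4_le hnot4 t_ge0.
Qed.
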